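(* Let $p$ be a prime, $n\ge1$, $(n_1,\dots,n_s)$ a partition of $n$, and for each $i$ let $1,\omega_i,\dots,\omega_i^{n_i-1}$ be a basis of $\mathbb{F}_{p^{n_i}}$ over $\mathbb{F}_p$ (with $\omega_i$ a root of an irreducible polynomial of degree $n_i$ over $\mathbb{F}_p$). Let $\mathbf{z}=(z_1,\dots,z_s)$ with $z_i\in\mathbb{F}_{p^{n_i}}\setminus\{0\}$. Let $A,A'\in\mathrm{GL}_n(\mathbb{F}_p)$, whose rows, indexed in blocks as $(i,j)$ with $1\le i\le s$, $1\le j\le n_i$, define linear forms $L_{i,j}$ and $L'_{i,j}$ respectively, and put $\lambda_i(\mathbf{x})=\sum_{j}L_{i,j}(\mathbf{x})\omega_i^{j-1}$, $\lambda_i'(\mathbf{y})=\sum_jL'_{i,j}(\mathbf{y})\omega_i^{j-1}$. Define the lattice $$\mathcal{L}_{\mathbf{z}}=\{(\mathbf{x},\mathbf{y})\in\mathbb{Z}^{2n}:\lambda_i(\mathbf{x})=z_i\lambda_i'(\mathbf{y})\text{ in }\mathbb{F}_{p^{n_i}}\text{ for }1\le i\le s\}.$$ Then there exist $A'',A'''\in\mathrm{GL}_n(\mathbb{F}_p)$, with associated linear forms $L''_{i,j},L'''_{i,j}$ and $\lambda_i''(\mathbf{v})=\sum_jL''_{i,j}(\mathbf{v})\omega_i^{j-1}$, $\lambda_i'''(\mathbf{u})=\sum_jL'''_{i,j}(\mathbf{u})\omega_i^{j-1}$, such that $$p\mathcal{L}_{\mathbf{z}}^*=\{(\mathbf{u},\mathbf{v})\in\mathbb{Z}^{2n}:\lambda_i''(\mathbf{v})=z_i\lambda_i'''(\mathbf{u})\text{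 in }\mathbb{F}_{p^{n_i}}\text{ for }1\le i\le s\}.$$
   Context: The dual lattice of a full-rank lattice $\mathcal{L}\subseteq\mathbb{R}^m$ is $\mathcal{L}^*=\{\mathbf{u}\in\mathbb{R}^m:\langle\mathbf{u},\mathbf{x}\rangle\in\mathbb{Z}\ \forall\mathbf{x}\in\mathcal{L}\}$. Linear forms over $\mathbb{F}_p$ are evaluated at integer vectors by reduction mod $p$. *)

From HB Require Import structures.
From mathcomp Require Import all_boot all_order all_algebra all_field.
From mathcomp Require Import reals.
Set Implicit Arguments. Unset Strict Implicit. Unset Printing Implicit Defensive.
Import Order.TTheory GRing.Theory Num.Theory.
Local Open Scope ring_scope.

(* The rows of a matrix
   A : 'M['F_p]_(\sum_i ns i) are indexed in blocks (i, j), i < s, j < ns i,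
   via the standard block index [tagnat.Rank i j] (row number
   ns 0 + ... + ns (i-1) + j). *)
Definition lform (p s : nat) (ns : 'I_s -> nat)
    (A : 'M['F_p]_(\sum_(i < s) ns i)) (i : 'I_s) (j : 'I_(ns i))
    (x : 'rV[int]_(\sum_(i < s) ns i)) : 'F_p :=
  \sum_k A (tagnat.Rank i j) k * (x 0 k)%:~R.

(* lambda_i(x) = sum_j L_{i,j}(x) omega_i^(j-1)  (0-based: omega_i ^+ j). *)
Definition lam (p s : nat) (ns : 'I_s -> nat)
    (K : 'I_s -> fieldExtType 'F_p) (w : forall i, K i)
    (A : 'M['F_p]_(\sum_(i < s) ns i)) (i : 'I_s)
    (x : 'rV[int]_(\sum_(i < s) ns i)) : K i :=
  \sum_(j < ns i) lform A j x *: (w i) ^+ j.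

Definition inLz (p s : nat) (ns : 'I_s -> nat)
    (K : 'I_s -> fieldExtType 'F_p) (w : forall i, K i) (z : forall i, K i)
    (A A' : 'M['F_p]_(\sum_(i < s) ns i))
    (x y : 'rV[int]_(\sum_(i < s) ns i)) : Prop :=
  forall i : 'I_s, lam w A i x = z i * lam w A' i y.

Definition in_dual (R : realType) (m : nat)
    (Lat : 'rV[int]_m -> 'rV[int]_m -> Prop) (a b : 'rV[R]_m) : Prop :=
  forall x y : 'rV[int]_m, Lat x y ->
    (\sum_(k < m) a 0 k * (x 0 k)%:~R + \sum_(k < m) b 0 k * (y 0 k)%:~R)
      \is a Num.int.

(* Reducing mod p, a point (x, y) of L_z is an integer point with
   x = y C (mod p) for the F_p-matrix C = A'^T M_z (A^T)^-1, where M_z is the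
   matrix of multiplication by z = (z_i) in the bases 1, w_i, ..., w_i^(n_i-1).
   Such a lattice contains p Z^(2n), so p L_z^* consists of integer vectors,
   and an integer (u, v) lies in p L_z^* iff p divides <u, x> + <v, y> on the
   whole lattice.  For the graph of C this says v = - u C^T (mod p), which has
   the required shape with A'' = 1 and A''' = - (C^T M_z^-1)^T. *)
From HB Require Import structures.
From mathcomp Require Import all_boot all_order all_algebra all_field.
From mathcomp Require Import reals.
Set Implicit Arguments. Unset Strict Implicit. Unset Printing Implicit Defensive.
Import Order.TTheory GRing.Theory Num.Theory.
Local Open Scope ring_scope.

Local Notation intR := (map_mx (fun t : int => t%:~R)).

Lemma graph_orthogonalE (R : comPzRingType) m (C : 'M[R]_m) (u v : 'rV[R]_m) :
  (forall y : 'rV[R]_m, (y *m C *m u^T + y *m v^T) 0 0 = 0) <->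
  v = - (u *m C^T).
Proof.
split=> [orth_uv | ->]; last first.
  by move=> y; rewrite linearN /= trmx_mul trmxK mulmxN mulmxA addrN mxE.
have Cu_v0 : C *m u^T + v^T = 0.
  apply/row_matrixP => k; rewrite row0 rowE mulmxDr mulmxA.
  by apply/matrixP => i j; rewrite !ord1 orth_uv mxE.
by rewrite -[v]trmxK -[v^T](addKr (C *m u^T)) Cu_v0 addr0 linearN /= trmx_mul trmxK.
Qed.

Lemma intR_rowP (R : archiNumDomainType) m (a : 'rV[R]_m) :
  (forall k, a 0 k \is a Num.int) -> exists u : 'rV[int]_m, intR u = a.
Proof.
move=> a_int; exists (\row_k Num.floor (a 0 k)).
by apply/rowP => k; rewrite !mxE; apply/eqP; rewrite -intrEfloor.
Qed.

Lemma sum_scaler_mul (R : comPzRingType) m (r : R) (c : 'rV[R]_m) (X : 'I_m -> R) :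
  \sum_k (r *: c) 0 k * X k = r * \sum_k c 0 k * X k.
Proof. by rewrite mulr_sumr; apply: eq_bigr => k _; rewrite mxE mulrA. Qed.

Section Reduction.
Variables (p m : nat).

Definition reduce (x : 'rV[int]_m) : 'rV['F_p]_m := intR x.

Definition lift_Fp (y : 'rV['F_p]_m) : 'rV[int]_m :=
  map_mx (fun t : 'F_p => (t : nat)%:Z) y.

Lemma lift_FpK y : reduce (lift_Fp y) = y.
Proof. by apply/rowP => k; rewrite !mxE; exact: natr_Zp. Qed.

Definition dotz (u x : 'rV[int]_m) : int := \sum_k u 0 k * x 0 k.

Lemma reduce_dotz u x : (dotz u x)%:~R = (reduce x *m (reduce u)^T) 0 0 :> 'F_p.
Proof.
by rewrite !mxE rmorph_sum; apply: eq_bigr => k _; rewrite !mxE rmorphM mulrC.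
Qed.

End Reduction.

Arguments reduce {p m}.

Lemma intR_dotz (R : numDomainType) m (u x : 'rV[int]_m) :
  \sum_k (intR u) 0 k * (x 0 k)%:~R = (dotz u x)%:~R :> R.
Proof. by rewrite rmorph_sum; apply: eq_bigr => k _; rewrite mxE rmorphM. Qed.

Section ScaledDual.
Variables (R : realType) (p m : nat) (Lat : 'rV[int]_m -> 'rV[int]_m -> Prop).
Hypothesis p_prime : prime p.

Lemma scaled_dual_intE (u v : 'rV[int]_m) :
  (exists c d : 'rV[R]_m,
      in_dual Lat c d /\ intR u = p%:R *: c /\ intR v = p%:R *: d) <->
  (forall x y, Lat x y -> (p%:Z %| dotz u x + dotz v y)%Z).
Proof.
have p_neq0 : p%:R != 0 :> R by rewrite pnatr_eq0 -lt0n prime_gt0.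
have pairingE (c d : 'rV[R]_m) x y :
    intR u = p%:R *: c -> intR v = p%:R *: d ->
    (dotz u x + dotz v y)%:~R =
      p%:R * (\sum_k c 0 k * (x 0 k)%:~R + \sum_k d 0 k * (y 0 k)%:~R).
  by move=> uE vE; rewrite rmorphD /= -!intR_dotz uE vE !sum_scaler_mul mulrDr.
split=> [[c [d [dual_cd [uE vE]]]] x y Lxy | dvd_uv].
  have /intrP [k kE] := dual_cd _ _ Lxy.
  apply/dvdzP; exists k; apply: (@intr_inj R).
  by rewrite (pairingE c d) // kE rmorphM /= mulrC.
exists (p%:R^-1 *: intR u), (p%:R^-1 *: intR v).
split; last by rewrite !scalerA mulfV // !scale1r.
move=> x y Lxy; have /dvdzP [k kE] := dvd_uv _ _ Lxy.
rewrite !sum_scaler_mul -mulrDr !intR_dotz -rmorphD /= kE rmorphM /=.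
by rewrite mulrCA mulVf // mulr1 intr_int.
Qed.

Hypothesis Lat_scale : forall x y, Lat (p%:Z *: x) (p%:Z *: y).

Lemma scaled_dual_integral (c d : 'rV[R]_m) :
  in_dual Lat c d -> exists u v, intR u = p%:R *: c /\ intR v = p%:R *: d.
Proof.
move=> dual_cd.
have pairing_delta (e : 'rV[R]_m) k :
    \sum_l e 0 l * ((p%:Z *: delta_mx 0 k : 'rV[int]_m) 0 l)%:~R = p%:R * e 0 k.
  rewrite (bigD1 k) //= big1 => [|l /negbTE l_neq_k]; last by rewrite !mxE l_neq_k mulr0 mulr0.
  by rewrite !mxE !eqxx mulr1 addr0 mulrC.
have pairing0 (e : 'rV[R]_m) : \sum_l e 0 l * ((p%:Z *: 0 : 'rV[int]_m) 0 l)%:~R = 0.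
  by rewrite big1 // => l _; rewrite scaler0 mxE mulr0.
have [u uE] : exists u : 'rV[int]_m, intR u = p%:R *: c.
  apply: intR_rowP => k; rewrite mxE.
  by have := dual_cd _ _ (Lat_scale (delta_mx 0 k) 0); rewrite pairing_delta pairing0 addr0.
have [v vE] : exists v : 'rV[int]_m, intR v = p%:R *: d.
  apply: intR_rowP => k; rewrite mxE.
  by have := dual_cd _ _ (Lat_scale 0 (delta_mx 0 k)); rewrite pairing_delta pairing0 add0r.
by exists u, v.
Qed.

End ScaledDual.

Section GraphLattice.
Variables (p m : nat) (C : 'M['F_p]_m).
Hypothesis p_prime : prime p.

Definition graph_lattice (x y : 'rV[int]_m) : Prop := reduce x = reduce y *m C.

Lemma graph_lattice_scale x y : graph_lattice (p%:Z *: x) (p%:Z *: y).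
Proof.
have reduce_p (t : 'rV[int]_m) : reduce (p%:Z *: t) = 0 :> 'rV['F_p]_m.
  by apply/rowP => k; rewrite !mxE rmorphM /= -pmulrn pchar_Fp_0 // mul0r.
by rewrite /graph_lattice !reduce_p mul0mx.
Qed.

Lemma graph_lattice_dvdE u v :
  (forall x y, graph_lattice x y -> (p%:Z %| dotz u x + dotz v y)%Z) <->
  reduce v = - (reduce u *m C^T).
Proof.
have dvdE x y : graph_lattice x y -> (p%:Z %| dotz u x + dotz v y)%Z =
    (((reduce y *m C) *m (reduce u)^T + reduce y *m (reduce v)^T) 0 0 == 0).
  by move=> xyE; rewrite (dvdz_pcharf (pchar_Fp p_prime)) rmorphD /= !reduce_dotz xyE [in RHS]mxE.
split=> [dvd_uv | /graph_orthogonalE orth_uv x y xyE]; last by rewrite dvdE // orth_uv.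
apply/graph_orthogonalE => y.
have xyE : graph_lattice (lift_Fp (y *m C)) (lift_Fp y) by rewrite /graph_lattice !lift_FpK.
by have := dvd_uv _ _ xyE; rewrite dvdE // lift_FpK => /eqP.
Qed.

Lemma scaled_dual_graphE (R : realType) (Lat : 'rV[int]_m -> 'rV[int]_m -> Prop)
    (a b : 'rV[R]_m) :
  (forall x y, Lat x y <-> graph_lattice x y) ->
  (exists c d, in_dual Lat c d /\ a = p%:R *: c /\ b = p%:R *: d) <->
  (exists u v, [/\ a = intR u, b = intR v & reduce v = - (reduce u *m C^T)]).
Proof.
move=> LatE.
have Lat_scale x y : Lat (p%:Z *: x) (p%:Z *: y) by apply/LatE/graph_lattice_scale.
split=> [[c [d [dual_cd [-> ->]]]] | [u [v [-> -> uv_red]]]].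
  have [u [v [uE vE]]] := scaled_dual_integral Lat_scale dual_cd.
  exists u, v; split; rewrite ?uE ?vE //.
  apply/graph_lattice_dvdE => x y /LatE; apply: (scaled_dual_intE R Lat p_prime u v).1.
  by exists c, d.
have dvd_uv x y : Lat x y -> (p%:Z %| dotz u x + dotz v y)%Z.
  by move/LatE; exact: (graph_lattice_dvdE u v).2 uv_red x y.
have [c [d [dual_cd [uE vE]]]] := (scaled_dual_intE R Lat p_prime u v).2 dvd_uv.
by exists c, d; rewrite uE vE.
Qed.

End GraphLattice.

Section BlockFields.
Variables (p s : nat) (ns : 'I_s -> nat) (K : 'I_s -> fieldExtType 'F_p)
  (w : forall i, K i).
Local Notation n := (\sum_(i < s) ns i).

Definition to_fields (t : 'rV['F_p]_n) (i : 'I_s) : K i :=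
  \sum_(j < ns i) t 0 (tagnat.Rank i j) *: w i ^+ j.

Lemma lam_to_fields A i x : lam w A i x = to_fields (reduce x *m A^T) i.
Proof.
rewrite /lam /to_fields; apply: eq_bigr => j _; congr (_ *: _).
by rewrite /lform !mxE; apply: eq_bigr => k _; rewrite !mxE mulrC.
Qed.

Lemma to_fields_mulmx t (M : 'M_n) i :
  to_fields (t *m M) i = \sum_k t 0 k *: to_fields (row k M) i.
Proof.
rewrite /to_fields.
under eq_bigr => j _ do rewrite mxE scaler_suml.
rewrite exchange_big /=; apply: eq_bigr => k _.
by rewrite scaler_sumr; apply: eq_bigr => j _; rewrite mxE scalerA.
Qed.

Lemma to_fieldsB t t' i : to_fields (t - t') i = to_fields t i - to_fields t' i.
Proof. by rewrite /to_fields -sumrB; apply: eq_bigr => j _; rewrite !mxE scalerBl. Qed.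

Hypothesis w_basis : forall i, basis_of {: K i} (mkseq (fun j => w i ^+ j) (ns i)).

Definition powers i : (ns i).-tuple (K i) :=
  Tuple (introT eqP (size_mkseq (fun j => w i ^+ j) (ns i))).

Lemma powers_nth i (j : 'I_(ns i)) : (powers i)`_j = w i ^+ j.
Proof. by rewrite /= nth_mkseq. Qed.

Lemma to_fields_inj t t' : (forall i, to_fields t i = to_fields t' i) -> t = t'.
Proof.
move=> tt'E.
suff blockE i j : t 0 (tagnat.Rank i j) = t' 0 (tagnat.Rank i j).
  by apply/rowP => k; rewrite -(tagnat.sig2K k) blockE.
apply/eqP; rewrite -subr_eq0; apply/eqP.
have /freeP powers_free := basis_free (w_basis i : basis_of _ (powers i)).
apply: (powers_free (fun j => t 0 (tagnat.Rank i j) - t' 0 (tagnat.Rank i j))).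
under eq_bigr => k _ do rewrite powers_nth.
transitivity (to_fields (t - t') i); first by apply: eq_bigr => k _; rewrite !mxE.
by rewrite to_fieldsB tt'E subrr.
Qed.

Definition of_fields (f : forall i, K i) : 'rV['F_p]_n :=
  \row_k (fun q : {i : 'I_s & 'I_(ns i)} =>
            coord (powers (tag q)) (tagged q) (f (tag q))) (tagnat.sig k).

Lemma of_fieldsK f i : to_fields (of_fields f) i = f i.
Proof.
rewrite [RHS](coord_basis (w_basis i : basis_of _ (powers i))) ?memvf //.
rewrite /to_fields; apply: eq_bigr => j _.
by rewrite mxE /tagnat.Rank tagnat.rankK /= powers_nth.
Qed.

Definition mulz_mx (z : forall i, K i) : 'M['F_p]_n :=
  \matrix_k of_fields (fun i => z i * to_fields (delta_mx 0 k) i).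

Lemma to_fields_mulz z t i : to_fields (t *m mulz_mx z) i = z i * to_fields t i.
Proof.
rewrite to_fields_mulmx -[t in RHS]mulmx1 to_fields_mulmx mulr_sumr.
apply: eq_bigr => k _; rewrite row1 rowK of_fieldsK -scalerAr.
by congr (_ *: (_ * to_fields _ i)); apply/rowP => l; rewrite !mxE.
Qed.

Lemma mulz_mx_unit z : (forall i, z i != 0) -> mulz_mx z \in unitmx.
Proof.
move=> z_neq0.
suff /mulmx1_unit [] : mulz_mx z *m mulz_mx (fun i => (z i)^-1) = 1%:M by [].
apply/row_matrixP => k; rewrite row1 rowE mulmxA.
by apply: to_fields_inj => i; rewrite !to_fields_mulz mulrA mulVf ?mul1r ?z_neq0.
Qed.

Definition lattice_mx z (A A' : 'M['F_p]_n) := A'^T *m mulz_mx z *m invmx A^T.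

Lemma inLz_graph z A A' x y : A \in unitmx ->
  inLz w z A A' x y <-> graph_lattice (lattice_mx z A A') x y.
Proof.
move=> A_unit; have At_unit : A^T \in unitmx by rewrite unitmx_tr.
have mulAE : (reduce x *m A^T = reduce y *m A'^T *m mulz_mx z) <->
    graph_lattice (lattice_mx z A A') x y.
  rewrite /graph_lattice /lattice_mx !mulmxA.
  by split=> [<- | ->]; rewrite ?mulmxK ?mulmxKV.
rewrite -mulAE; split=> [xyE | xyE i]; last by rewrite !lam_to_fields xyE to_fields_mulz.
by apply: to_fields_inj => i; rewrite to_fields_mulz -!lam_to_fields xyE.
Qed.

Lemma lattice_mx_unit z A A' : (forall i, z i != 0) ->
  A \in unitmx -> A' \in unitmx -> lattice_mx z A A' \in unitmx.
Proof.
move=> z_neq0 A_unit A'_unit.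
by rewrite !unitmx_mul unitmx_inv !unitmx_tr A_unit A'_unit mulz_mx_unit.
Qed.

Definition dual_form_mx z (C : 'M['F_p]_n) := - (C^T *m invmx (mulz_mx z))^T.

Lemma dual_form_mx_unit z C : (forall i, z i != 0) ->
  C \in unitmx -> dual_form_mx z C \in unitmx.
Proof.
move=> z_neq0 C_unit.
rewrite /dual_form_mx -scaleN1r unitmxZ ?unitrN1 // unitmx_tr unitmx_mul unitmx_tr C_unit.
by rewrite unitmx_inv mulz_mx_unit.
Qed.

Lemma lam_dual_formE z C u v : (forall i, z i != 0) ->
  (forall i, lam w 1%:M i v = z i * lam w (dual_form_mx z C) i u) <->
  reduce v = - (reduce u *m C^T).
Proof.
move=> z_neq0.
have dualE : reduce u *m (dual_form_mx z C)^T *m mulz_mx z = - (reduce u *m C^T).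
  by rewrite /dual_form_mx linearN /= trmxK mulmxN mulNmx mulmxA mulmxKV ?mulz_mx_unit.
split=> [vE | vE i]; last by rewrite !lam_to_fields -to_fields_mulz dualE trmx1 mulmx1 vE.
rewrite -dualE; apply: to_fields_inj => i.
by rewrite to_fields_mulz -lam_to_fields -vE lam_to_fields trmx1 mulmx1.
Qed.

End BlockFields.

Theorem proposition5p2 (R : realType) (p : nat) (s : nat) (ns : 'I_s -> nat)
    (K : 'I_s -> fieldExtType 'F_p) (w : forall i, K i) (z : forall i, K i)
    (A A' : 'M['F_p]_(\sum_(i < s) ns i)) :
  prime p ->
  (0 < \sum_(i < s) ns i)%N ->
  (forall i, 0 < ns i)%N ->
  (forall i, \dim {: K i} = ns i) ->
  (forall i, basis_of {: K i} (mkseq (fun j => w i ^+ j) (ns i))) ->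
  (forall i, z i != 0) ->
  A \in unitmx -> A' \in unitmx ->
  exists A'' A''' : 'M['F_p]_(\sum_(i < s) ns i),
    [/\ A'' \in unitmx, A''' \in unitmx &
      forall a b : 'rV[R]_(\sum_(i < s) ns i),
        (exists c d : 'rV[R]_(\sum_(i < s) ns i),
            in_dual (inLz w z A A') c d /\ a = p%:R *: c /\ b = p%:R *: d)
        <->
        (exists u v : 'rV[int]_(\sum_(i < s) ns i),
            [/\ a = map_mx (fun t : int => t%:~R) u,
                b = map_mx (fun t : int => t%:~R) v &
                forall i : 'I_s, lam w A'' i v = z i * lam w A''' i u])].
Proof.
move=> p_prime _ _ _ w_basis z_neq0 A_unit A'_unit.
set C := lattice_mx w z A A'.
exists 1%:M, (dual_form_mx w z C); split.
- exact: unitmx1.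
- exact: (dual_form_mx_unit w_basis z_neq0 (lattice_mx_unit w_basis z_neq0 A_unit A'_unit)).
move=> a b.
have LzE x y := inLz_graph w_basis z A' x y A_unit.
apply: iff_trans (scaled_dual_graphE p_prime a b LzE) _.
by split=> -[u [v [-> -> vE]]]; exists u, v; split=> //; apply/(lam_dual_formE w_basis C u v z_neq0).
Qed.
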